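(* Let $\mathbb{K}=\mathbb{R}$ or $\mathbb{C}$, let $(V,W_\ast)$ be a finite-dimensional $\mathbb{K}$-vector space with an increasing filtration, and let $\phi:A_1^\ast\to A_2^\ast$ be a morphism of cohomologically connected DGAs over $\mathbb{K}$ inducing isomorphisms on $0$-th and first cohomology and an injection on second cohomology. Then the functor $F_{gr}(\phi):F^{nil}_{gr}(A_1^\ast,V,W_\ast)\to F^{nil}_{gr}(A_2^\ast,V,W_\ast)$ is an equivalence of categories.
   Context: A DGA is cohomologically connected if $H^0\cong\mathbb{K}$. $W_k(\mathrm{End}(V))$ denotes endomorphisms $f$ with $f(W_iV)\subset W_{i+k}V$ for all $i$. The category $F^{nil}_{gr}(A^\ast,V,W_\ast)$ has objects $\omega\in A^1\otimes W_{-1}(\mathrm{End}(V))$ satisfying $d\omega+\frac12[\omega,\omega]=0$, and morphisms from $\omega_1$ to $\omega_2$ the elements $a\in\mathrm{Id}_V+A^0\otimes W_{-1}(\mathrm{End}(V))$ with $da+\omega_1a-a\omega_2=0$ (products combine the DGA product and composition in $\mathrm{End}(V)$). The functor $F_{gr}(\phi)$ applies $\phi\otimes\mathrm{id}$ to objects and morphisms. *)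

From mathcomp Require Import all_boot all_algebra.
From mathcomp Require Import Rstruct complex.
Unset Printing Implicit Defensive.
Import GRing.Theory.
Local Open Scope ring_scope.

Definition Kfld (b : bool) : fieldType :=
  if b then (Rdefinitions.R : fieldType) else (Rdefinitions.R[i] : fieldType).

(* A DGA is a K-algebra A = (+)_{n >= 0} A^n, the grading being given   *)
(* by a family of projections dga_proj n onto A^n, with a differential  *)
(* d of degree +1 satisfying d o d = 0 and the graded Leibniz rule.     *)
Record DGA (K : fieldType) := {
  dga_car :> algType K;
  dga_proj : nat -> dga_car -> dga_car;
  dga_d : dga_car -> dga_car;
  dga_proj_linear : forall n, linear (dga_proj n);
  dga_proj_proj : forall m n x,
      dga_proj n (dga_proj m x) = if m == n then dga_proj n x else 0;
  dga_decomp : forall x, exists N, x = \sum_(i < N) dga_proj i x;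
  dga_one : dga_proj 0 1 = 1;
  dga_mul : forall p q a b, dga_proj p a = a -> dga_proj q b = b ->
      dga_proj (p + q) (a * b) = a * b;
  dga_d_linear : linear dga_d;
  dga_d_deg : forall n a, dga_proj n a = a -> dga_proj n.+1 (dga_d a) = dga_d a;
  dga_dd : forall a, dga_d (dga_d a) = 0;
  dga_leibniz : forall p a b, dga_proj p a = a ->
      dga_d (a * b) = dga_d a * b + ((-1) ^+ p : K) *: (a * dga_d b)
}.
Arguments dga_car {K}.
Arguments dga_proj {K} d _ _.
Arguments dga_d {K} d _.

Definition homog {K} (A : DGA K) (n : nat) (x : A) : Prop := dga_proj A n x = x.
Definition cocycle {K} (A : DGA K) n (x : A) : Prop := homog A n x /\ dga_d A x = 0.
Definition coboundary {K} (A : DGA K) n (x : A) : Prop :=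
  match n with
  | 0 => x = 0
  | m.+1 => exists y, homog A m y /\ x = dga_d A y
  end.

(* H^0(A) = Z^0(A) is isomorphic to K as a K-vector space. *)
Definition cohom_connected {K} (A : DGA K) : Prop :=
  exists f : K^o -> A, linear f /\ injective f /\
    (forall c, cocycle A 0 (f c)) /\ (forall z, cocycle A 0 z -> exists c, f c = z).

Definition DGA_morphism {K} {A1 A2 : DGA K} (phi : A1 -> A2) : Prop :=
  [/\ linear phi, phi 1 = 1, (forall a b, phi (a * b) = phi a * phi b),
      (forall n a, homog A1 n a -> homog A2 n (phi a)) &
      (forall a, phi (dga_d A1 a) = dga_d A2 (phi a))].

Definition Hinj {K} {A1 A2 : DGA K} (phi : A1 -> A2) n : Prop :=
  forall z, cocycle A1 n z -> coboundary A2 n (phi z) -> coboundary A1 n z.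
Definition Hsurj {K} {A1 A2 : DGA K} (phi : A1 -> A2) n : Prop :=
  forall z, cocycle A2 n z -> exists y, cocycle A1 n y /\ coboundary A2 n (phi y - z).

(* Filtered vector space (V, W_* ) with V = K^n (row vectors); W i is a  *)
(* matrix whose row space is the subspace W_i V.                        *)
Definition filtration {K : fieldType} {n} (W : int -> 'M[K]_n) : Prop :=
  (forall i, (W i <= W (i + 1)%R)%MS) /\
  (exists a, (W a <= (0 : 'M[K]_n))%MS) /\ (exists b, ((1%:M : 'M[K]_n) <= W b)%MS).

(* W_k(End V): endomorphisms f (acting on row vectors, v |-> v *m f)    *)
(* with f(W_i V) contained in W_{i+k} V for all i.                      *)
Definition W_End {K : fieldType} {n} (W : int -> 'M[K]_n) (k : int) (f : 'M[K]_n) : Prop :=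
  forall i : int, (W i *m f <= W (i + k)%R)%MS.

(* A (x) End(V) is identified with matrices over A: a (x) f is the       *)
(* matrix with entries f i j *: a.                                      *)
Definition tens {K} (A : DGA K) {n} (a : A) (f : 'M[K]_n) : 'M[A]_n :=
  \matrix_(i, j) (f i j *: a).

Definition in_tens {K} (A : DGA K) {n} (p : nat) (S : 'M[K]_n -> Prop) (M : 'M[A]_n) : Prop :=
  exists k (a : 'I_k -> A) (f : 'I_k -> 'M[K]_n),
    (forall j, homog A p (a j) /\ S (f j)) /\ M = \sum_(j < k) tens A (a j) (f j).

Definition dmx {K} {A : DGA K} {n} (M : 'M[A]_n) : 'M[A]_n := map_mx (dga_d A) M.
Definition scalemxK {K} (A : DGA K) {n} (c : K) (M : 'M[A]_n) : 'M[A]_n :=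
  map_mx (fun x : A => c *: x) M.

Definition gbracket {K} {A : DGA K} {n} (p q : nat) (M N : 'M[A]_n) : 'M[A]_n :=
  M *m N - scalemxK A ((-1) ^+ (p * q)) (N *m M).

Definition Fobj {K} {A : DGA K} {n} (W : int -> 'M[K]_n) (w : 'M[A]_n) : Prop :=
  in_tens A 1 (W_End W (-1)) w /\
  dmx w + scalemxK A (2%:R^-1) (gbracket 1 1 w w) = 0.

Definition Fhom {K} {A : DGA K} {n} (W : int -> 'M[K]_n) (w1 w2 a : 'M[A]_n) : Prop :=
  (exists N, in_tens A 0 (W_End W (-1)) N /\ a = 1%:M + N) /\
  dmx a + w1 *m a - a *m w2 = 0.

(* Categories presented by predicates on a type of objects and a type   *)
(* of morphisms; composition is written in diagrammatic order.          *)
Record PCat := {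
  pc_ob : Type;
  pc_isob : pc_ob -> Prop;
  pc_mor : Type;
  pc_ishom : pc_ob -> pc_ob -> pc_mor -> Prop;
  pc_comp : pc_mor -> pc_mor -> pc_mor;
  pc_id : pc_ob -> pc_mor
}.
Arguments pc_isob {p} _.
Arguments pc_ishom {p} _ _ _.
Arguments pc_comp {p} _ _.
Arguments pc_id {p} _.

Definition Fcat {K} (A : DGA K) {n} (W : int -> 'M[K]_n) : PCat := {|
  pc_ob := 'M[A]_n;
  pc_isob := Fobj W;
  pc_mor := 'M[A]_n;
  pc_ishom := Fhom W;
  pc_comp := fun a b => a *m b;
  pc_id := fun _ => 1%:M
|}.

Definition is_functor {C D : PCat} (Fo : pc_ob C -> pc_ob D)
    (Fm : pc_ob C -> pc_ob C -> pc_mor C -> pc_mor D) : Prop :=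
  [/\ (forall x, pc_isob x -> pc_isob (Fo x)),
      (forall x y f, pc_isob x -> pc_isob y -> pc_ishom x y f ->
          pc_ishom (Fo x) (Fo y) (Fm x y f)),
      (forall x, pc_isob x -> Fm x x (pc_id x) = pc_id (Fo x)) &
      (forall x y z f g, pc_isob x -> pc_isob y -> pc_isob z ->
          pc_ishom x y f -> pc_ishom y z g ->
          Fm x z (pc_comp f g) = pc_comp (Fm x y f) (Fm y z g))].

Definition is_nat_iso {C D : PCat} (Fo Go : pc_ob C -> pc_ob D)
    (Fm Gm : pc_ob C -> pc_ob C -> pc_mor C -> pc_mor D)
    (eta : pc_ob C -> pc_mor D) : Prop :=
  (forall x, pc_isob x -> pc_ishom (Fo x) (Go x) (eta x) /\
     exists e', pc_ishom (Go x) (Fo x) e' /\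
       pc_comp (eta x) e' = pc_id (Fo x) /\ pc_comp e' (eta x) = pc_id (Go x)) /\
  (forall x y f, pc_isob x -> pc_isob y -> pc_ishom x y f ->
     pc_comp (Fm x y f) (eta y) = pc_comp (eta x) (Gm x y f)).

Definition is_equivalence {C D : PCat} (Fo : pc_ob C -> pc_ob D)
    (Fm : pc_ob C -> pc_ob C -> pc_mor C -> pc_mor D) : Prop :=
  is_functor Fo Fm /\
  exists (Go : pc_ob D -> pc_ob C) (Gm : pc_ob D -> pc_ob D -> pc_mor D -> pc_mor C)
         (eta : pc_ob C -> pc_mor C) (eps : pc_ob D -> pc_mor D),
    [/\ is_functor Go Gm,
        is_nat_iso (fun x => x) (fun x => Go (Fo x))
                   (fun _ _ f => f) (fun x y f => Gm (Fo x) (Fo y) (Fm x y f)) eta &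
        is_nat_iso (fun y => Fo (Go y)) (fun y => y)
                   (fun y y' g => Fm (Go y) (Go y') (Gm y y' g)) (fun _ _ g => g) eps].

(* The subspaces A ⊗ W_{-k}End(V), k >= 1, form a finite decreasing filtration of
   A ⊗ W_{-1}End(V).  Writing an element of a graded piece A ⊗ Gr_{-k}End(V) in a basis
   of Gr_{-k}End(V) shows that on these pieces phi ⊗ id keeps the injectivity and
   surjectivity of phi on H^0, H^1 and H^2.  Faithfulness, fullness and essential
   surjectivity of F_gr(phi) then follow by successive approximation: a gauge
   transformation (resp. a Maurer-Cartan element with a gauge transformation) that is
   right modulo the k-th step of the filtration is corrected modulo the (k+1)-st using
   H^0 and H^1 (resp. H^1 and H^2), and the process stops because the filtration is
   finite.  As every morphism 1 + N with N nilpotent is invertible, the fully faithful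
   and essentially surjective functor F_gr(phi) is an equivalence.  Since 2 is
   invertible in K, the objects are the solutions of dw + w w = 0. *)

From HB Require Import structures.
From mathcomp Require Import all_boot all_algebra.
From mathcomp Require Import Rstruct complex.
From mathcomp Require Import zify.
From Stdlib Require Import Classical IndefiniteDescription.
Import GRing.Theory Num.Theory.
Local Open Scope ring_scope.
Set Implicit Arguments.
Unset Strict Implicit.

(** * Homogeneous elements and matrices over a DGA *)

HB.instance Definition _ (K : fieldType) (A : DGA K) :=
  GRing.isLinear.Build K A A *:%R (dga_d A) (@dga_d_linear K A).
HB.instance Definition _ (K : fieldType) (A : DGA K) p :=
  GRing.isLinear.Build K A A *:%R (dga_proj A p) (@dga_proj_linear K A p).

Section DGATheory.
Variables (K : fieldType) (A : DGA K).
Implicit Types (x y : A).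

Lemma homog0 p : homog A p 0.
Proof. exact: linear0. Qed.

Lemma homogD p x y : homog A p x -> homog A p y -> homog A p (x + y).
Proof. by rewrite /homog linearD /= => -> ->. Qed.

Lemma homogN p x : homog A p x -> homog A p (- x).
Proof. by rewrite /homog linearN /= => ->. Qed.

Lemma homogZ p (c : K) x : homog A p x -> homog A p (c *: x).
Proof. by rewrite /homog linearZ /= => ->. Qed.

Lemma homog_sum p I (r : seq I) (P : pred I) (F : I -> A) :
  (forall i, P i -> homog A p (F i)) -> homog A p (\sum_(i <- r | P i) F i).
Proof.
by move=> hF; elim/big_rec: _ => [|i x Pi hx]; [exact: homog0 | apply: homogD; auto].
Qed.

Lemma homogM p q x y : homog A p x -> homog A q y -> homog A (p + q) (x * y).
Proof. exact: dga_mul. Qed.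

Lemma homog1 : homog A 0 1.
Proof. exact: dga_one. Qed.

Lemma dga_d1 : dga_d A 1 = 0.
Proof.
have := @dga_leibniz _ A 0 1 1 homog1; rewrite !mulr1 expr0 scale1r mul1r => h.
by apply: (addrI (dga_d A 1)); rewrite addr0 -h.
Qed.

End DGATheory.

Section MatrixDGA.
Variables (K : fieldType) (A : DGA K) (n : nat).
Implicit Types (M N : 'M[A]_n) (a : A) (f : 'M[K]_n).

Definition homog_mx p M := forall i j, homog A p (M i j).

Lemma homog_mx1 : homog_mx 0 1%:M.
Proof. by move=> i j; rewrite mxE; case: (i == j); [exact: homog1 | exact: homog0]. Qed.

Lemma homog_mxD p M N : homog_mx p M -> homog_mx p N -> homog_mx p (M + N).
Proof. by move=> hM hN i j; rewrite mxE; apply: homogD. Qed.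

Fact dmx_is_nmod_morphism : nmod_morphism (@dmx K A n).
Proof. by split=> [|M N]; rewrite /dmx ?map_mx0 ?map_mxD. Qed.
HB.instance Definition _ := GRing.isNmodMorphism.Build _ _ (@dmx K A n) dmx_is_nmod_morphism.

Lemma dmx1 : dmx (1%:M : 'M[A]_n) = 0.
Proof. by apply/matrixP=> i j; rewrite !mxE; case: (i == j); rewrite ?dga_d1 ?linear0. Qed.

Lemma dmxK M : dmx (dmx M) = 0.
Proof. by apply/matrixP=> i j; rewrite !mxE dga_dd. Qed.

Lemma dmxM_even M N : homog_mx 0 M -> dmx (M *m N) = dmx M *m N + M *m dmx N.
Proof.
move=> hM; apply/matrixP=> i k; rewrite !mxE raddf_sum -big_split /=.
by apply: eq_bigr => j _; rewrite !mxE (@dga_leibniz _ _ _ _ _ (hM i j)) expr0 scale1r.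
Qed.

Lemma dmxM_odd M N : homog_mx 1 M -> dmx (M *m N) = dmx M *m N - M *m dmx N.
Proof.
move=> hM; apply/matrixP=> i k; rewrite !mxE raddf_sum -sumrB /=.
by apply: eq_bigr => j _; rewrite !mxE (@dga_leibniz _ _ _ _ _ (hM i j)) expr1 scaleN1r.
Qed.

Lemma tens0l f : tens A 0 f = 0.
Proof. by apply/matrixP=> i j; rewrite !mxE scaler0. Qed.

Lemma tensDl a b f : tens A (a + b) f = tens A a f + tens A b f.
Proof. by apply/matrixP=> i j; rewrite !mxE scalerDr. Qed.

Lemma tensNl a f : tens A (- a) f = - tens A a f.
Proof. by apply/matrixP=> i j; rewrite !mxE scalerN. Qed.

Lemma tensBl a b f : tens A (a - b) f = tens A a f - tens A b f.
Proof. by rewrite tensDl tensNl. Qed.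

Lemma tens_suml I (r : seq I) (P : pred I) (F : I -> A) f :
  tens A (\sum_(i <- r | P i) F i) f = \sum_(i <- r | P i) tens A (F i) f.
Proof. by elim/big_rec2: _ => [|i y1 y2 _ <-]; rewrite ?tens0l ?tensDl. Qed.

Lemma tens0r a : tens A a (0 : 'M[K]_n) = 0.
Proof. by apply/matrixP=> i j; rewrite !mxE scale0r. Qed.

Lemma tensDr a f g : tens A a (f + g) = tens A a f + tens A a g.
Proof. by apply/matrixP=> i j; rewrite !mxE scalerDl. Qed.

Lemma tensBr a f g : tens A a (f - g) = tens A a f - tens A a g.
Proof. by apply/matrixP=> i j; rewrite !mxE scalerBl. Qed.

Lemma tensZr a (c : K) f : tens A a (c *: f) = tens A (c *: a) f.
Proof. by apply/matrixP=> i j; rewrite !mxE scalerA mulrC. Qed.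

Lemma tens_sumr I (r : seq I) (P : pred I) (F : I -> 'M[K]_n) a :
  tens A a (\sum_(i <- r | P i) F i) = \sum_(i <- r | P i) tens A a (F i).
Proof. by elim/big_rec2: _ => [|i y1 y2 _ <-]; rewrite ?tens0r ?tensDr. Qed.

Lemma tensM a b f g : tens A a f *m tens A b g = tens A (a * b) (f *m g).
Proof.
apply/matrixP=> i k; rewrite !mxE scaler_suml; apply: eq_bigr => j _.
by rewrite !mxE -scalerAl -scalerAr scalerA.
Qed.

Lemma dmx_tens a f : dmx (tens A a f) = tens A (dga_d A a) f.
Proof. by apply/matrixP=> i j; rewrite !mxE linearZ. Qed.

End MatrixDGA.

Section InTens.
Variables (K : fieldType) (A : DGA K) (n : nat) (S : 'M[K]_n -> Prop).
Implicit Types (M N : 'M[A]_n).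

Lemma in_tens0 p : in_tens A p S 0.
Proof. by exists 0, (fun _ => 0), (fun _ => 0); split=> [[]//|]; rewrite big_ord0. Qed.

Lemma in_tens_tens p a f : homog A p a -> S f -> in_tens A p S (tens A a f).
Proof. by move=> ha hf; exists 1, (fun _ => a), (fun _ => f); split=> //; rewrite big_ord1. Qed.

Lemma in_tensD p M N : in_tens A p S M -> in_tens A p S N -> in_tens A p S (M + N).
Proof.
move=> [k1 [a1 [f1 [h1 ->]]]] [k2 [a2 [f2 [h2 ->]]]].
pose glue T (u : 'I_k1 -> T) (v : 'I_k2 -> T) (j : 'I_(k1 + k2)) :=
  match split j with inl i => u i | inr i => v i end.
exists (k1 + k2)%N, (glue _ a1 a2), (glue _ f1 f2); split=> [j|].
  by rewrite /glue; case: (split j).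
rewrite big_split_ord /=; congr (_ + _); apply: eq_bigr => i _.
  by rewrite /glue -[lshift _ _]/(unsplit (inl i)) unsplitK.
by rewrite /glue -[rshift _ _]/(unsplit (inr i)) unsplitK.
Qed.

Lemma in_tens_sum p I (r : seq I) (P : pred I) (F : I -> 'M[A]_n) :
  (forall i, P i -> in_tens A p S (F i)) -> in_tens A p S (\sum_(i <- r | P i) F i).
Proof.
by move=> hF; elim/big_rec: _ => [|i M Pi hM]; [exact: in_tens0 | apply: in_tensD; auto].
Qed.

Lemma in_tensN p M : in_tens A p S M -> in_tens A p S (- M).
Proof.
move=> [k [a [f [h ->]]]]; rewrite -sumrN; apply: in_tens_sum => j _.
by rewrite -tensNl; case: (h j) => ha hf; apply: in_tens_tens => //; apply: homogN.
Qed.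

Lemma in_tensB p M N : in_tens A p S M -> in_tens A p S N -> in_tens A p S (M - N).
Proof. by move=> hM hN; apply: in_tensD => //; apply: in_tensN. Qed.

Lemma in_tens_homog_mx p M : in_tens A p S M -> homog_mx p M.
Proof.
move=> [k [a [f [h ->]]]] u v; rewrite summxE; apply: homog_sum => j _.
by rewrite mxE; apply: homogZ; case: (h j).
Qed.

End InTens.

Lemma in_tens_sub (K : fieldType) (A : DGA K) n (S1 S2 : 'M[K]_n -> Prop) p M :
  (forall f, S1 f -> S2 f) -> in_tens A p S1 M -> in_tens A p S2 M.
Proof. by move=> hS [k [a [f [h ->]]]]; exists k, a, f; split=> // j; case: (h j); auto. Qed.

Lemma in_tensM (K : fieldType) (A : DGA K) n (S1 S2 S3 : 'M[K]_n -> Prop) p q M N :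
  (forall f g, S1 f -> S2 g -> S3 (f *m g)) ->
  in_tens A p S1 M -> in_tens A q S2 N -> in_tens A (p + q) S3 (M *m N).
Proof.
move=> hS [k1 [a1 [f1 [h1 ->]]]] [k2 [a2 [f2 [h2 ->]]]].
rewrite mulmx_suml; apply: in_tens_sum => i _; rewrite mulmx_sumr.
apply: in_tens_sum => j _; rewrite tensM; case: (h1 i) => ? ?; case: (h2 j) => ? ?.
by apply: in_tens_tens; [apply: homogM | apply: hS].
Qed.

Lemma in_tens_eq0 (K : fieldType) (A : DGA K) n p (M : 'M[A]_n) :
  in_tens A p (fun f => f = 0) M -> M = 0.
Proof. by move=> [k [a [f [h ->]]]]; apply: big1 => j _; case: (h j) => _ ->; apply: tens0r. Qed.

(** * Linear algebra of End(V) *)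

Definition subspace_pred (K : fieldType) (vT : lmodType K) (P : vT -> Prop) :=
  P 0 /\ forall (c : K) u v, P u -> P v -> P (c *: u + v).

Lemma vspace_of_pred (K : fieldType) (vT : vectType K) (P : vT -> Prop) :
  subspace_pred P -> exists U : {vspace vT}, forall v, v \in U <-> P v.
Proof.
move=> [P0 Plin].
suff grow m (U : {vspace vT}) : (\dim {:vT} - \dim U <= m)%N ->
    (forall v, v \in U -> P v) -> exists U' : {vspace vT}, forall v, v \in U' <-> P v.
  by apply: (grow _ 0%VS (leqnn _)) => v; rewrite memv0 => /eqP ->.
elim: m U => [|m IHm] U hm UP.
  exists U => v; split=> [/UP // | _].
  suff /eqP -> : U == fullv by rewrite memvf.
  by rewrite eqEdim subvf /= -subn_eq0 -leqn0.
case: (classic (forall v, P v -> v \in U)) => [PU | /not_all_ex_not [g]].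
  by exists U => v; split; [apply: UP | apply: PU].
move=> /(imply_to_and (P g)) [Pg gU].
apply: (IHm (U + <[g]>)%VS).
  have ltU : (\dim U < \dim (U + <[g]>))%N.
    rewrite ltnNge; apply/negP => leU; apply: gU.
    have /eqP -> : U == (U + <[g]>)%VS by rewrite eqEdim addvSl leU.
    by rewrite -{1}[g]add0r memv_add ?mem0v ?memv_line.
  by move: hm ltU (dimvS (subvf (U + <[g]>)%VS)); lia.
move=> _ /memv_addP [u Uu [_ /vlineP [c ->] ->]].
rewrite -[u]scale1r -[c *: g]addr0.
by apply: (Plin) => //; [apply: UP | apply: Plin].
Qed.

(* A linear form on End(V) is encoded by its matrix of values on the matrix units, so
   that it extends entrywise to A ⊗ End(V) as [mxpairA]. *)
Definition mxpair (K : fieldType) n (L f : 'M[K]_n) : K := \sum_i \sum_j L i j * f i j.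

Lemma mxpair_delta (K : fieldType) n (lambda : {linear 'M[K]_n -> K^o}) f :
  mxpair (\matrix_(i, j) lambda (delta_mx i j)) f = lambda f.
Proof.
rewrite {2}(matrix_sum_delta f) !raddf_sum; apply: eq_bigr => i _.
rewrite raddf_sum; apply: eq_bigr => j _.
by rewrite mxE mulrC; apply/esym/(linearZ_LR lambda).
Qed.

Lemma quotient_basis (K : fieldType) n (P0 P1 : 'M[K]_n -> Prop) :
  subspace_pred P0 -> subspace_pred P1 -> (forall f, P1 f -> P0 f) ->
  exists r (e L : 'I_r -> 'M[K]_n),
    [/\ forall i, P0 (e i),
        forall i f, P1 f -> mxpair (L i) f = 0 &
        forall f, P0 f -> P1 (f - \sum_i mxpair (L i) f *: e i)].
Proof.
move=> /vspace_of_pred [U0 U0E] /vspace_of_pred [U1 U1E] P10.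
have U10 : (U1 <= U0)%VS by apply/subvP => f /U1E /P10 /U0E.
pose pi := addv_pi1 U0 U1; pose lambda i := coord (vbasis U0) i \o pi.
have piE f : f \in U0 -> f - pi f = addv_pi2 U0 U1 f.
  move=> U0f; rewrite -{1}(addv_pi1_pi2 (subvP (addvSl U0 U1) _ U0f)).
  by rewrite addrC addKr.
have lambdaE i f : mxpair (\matrix_(u, v) lambda i (delta_mx u v)) f = lambda i f.
  exact: mxpair_delta.
exists (\dim U0), (fun i => (vbasis U0)`_i), (fun i => \matrix_(u, v) lambda i (delta_mx u v)).
split=> [i | i f /U1E U1f | f /U0E U0f]; rewrite ?lambdaE.
- by apply/U0E; rewrite vbasis_mem // mem_nth // size_tuple.
- have U0f : f \in U0 by rewrite (subvP U10).
  have /eqP := piE f U0f; rewrite addv_pi2_id // -subr_eq0 addrAC subrr add0r oppr_eq0.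
  by move=> /eqP pi0; rewrite /lambda /= pi0 linear0.
- under eq_bigr do rewrite lambdaE.
  by rewrite -(coord_vbasis (memv_pi1 _ _ _)) piE //; apply/U1E; apply: memv_pi2.
Qed.

Section PairingA.
Variables (K : fieldType) (A : DGA K) (n : nat).
Implicit Types (M : 'M[A]_n) (L f : 'M[K]_n).

Definition mxpairA L M : A := \sum_i \sum_j L i j *: M i j.

Fact mxpairA_is_nmod_morphism L : nmod_morphism (mxpairA L).
Proof.
split=> [|M N]; rewrite /mxpairA.
  by rewrite big1 // => i _; rewrite big1 // => j _; rewrite mxE scaler0.
rewrite -big_split; apply: eq_bigr => i _; rewrite -big_split; apply: eq_bigr => j _.
by rewrite mxE scalerDr.
Qed.
HB.instance Definition _ L :=
  GRing.isNmodMorphism.Build _ _ (mxpairA L) (mxpairA_is_nmod_morphism L).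

Lemma mxpairA_tens L a f : mxpairA L (tens A a f) = mxpair L f *: a.
Proof.
rewrite /mxpairA /mxpair scaler_suml; apply: eq_bigr => i _; rewrite scaler_suml.
by apply: eq_bigr => j _; rewrite mxE scalerA.
Qed.

Lemma mxpairA_dmx L M : mxpairA L (dmx M) = dga_d A (mxpairA L M).
Proof.
rewrite /mxpairA raddf_sum; apply: eq_bigr => i _; rewrite raddf_sum.
by apply: eq_bigr => j _; rewrite /= mxE linearZ.
Qed.

Lemma mxpairA_homog L p M : homog_mx p M -> homog A p (mxpairA L M).
Proof. by move=> hM; do 2!apply: homog_sum => ? _; apply: homogZ. Qed.

Lemma mxpairA_vanish (S : 'M[K]_n -> Prop) L p M :
  (forall f, S f -> mxpair L f = 0) -> in_tens A p S M -> mxpairA L M = 0.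
Proof.
move=> SL [k [a [f [h ->]]]]; rewrite raddf_sum big1 //= => j _.
by rewrite mxpairA_tens; case: (h j) => _ /SL ->; rewrite scale0r.
Qed.

Lemma mxpairA_cocycle (S : 'M[K]_n -> Prop) L p M :
  (forall f, S f -> mxpair L f = 0) -> homog_mx p M -> in_tens A p.+1 S (dmx M) ->
  cocycle A p (mxpairA L M).
Proof.
move=> SL hM hdM; split; first exact: mxpairA_homog.
by rewrite -mxpairA_dmx; apply: mxpairA_vanish hdM.
Qed.

Lemma in_tens_quotient (S0 S1 : 'M[K]_n -> Prop) r (e L : 'I_r -> 'M[K]_n) p M :
  (forall f, S0 f -> S1 (f - \sum_i mxpair (L i) f *: e i)) ->
  in_tens A p S0 M -> in_tens A p S1 (M - \sum_i tens A (mxpairA (L i) M) (e i)).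
Proof.
move=> S01 [k [a [f [h ->]]]].
have -> : \sum_i tens A (mxpairA (L i) (\sum_(j < k) tens A (a j) (f j))) (e i) =
    \sum_(j < k) tens A (a j) (\sum_i mxpair (L i) (f j) *: e i).
  under eq_bigr do rewrite raddf_sum /= tens_suml.
  rewrite exchange_big /=; apply: eq_bigr => j _; rewrite tens_sumr.
  by apply: eq_bigr => i _; rewrite mxpairA_tens tensZr.
rewrite -sumrB; apply: in_tens_sum => j _; rewrite -tensBr.
by case: (h j) => ? ?; apply: in_tens_tens => //; apply: S01.
Qed.

End PairingA.

(** * Identities between matrix expressions *)

Inductive zmod_expr := ZAtom of nat | ZZero | ZAdd of zmod_expr & zmod_expr | ZOpp of zmod_expr.

Fixpoint zmod_eval (V : zmodType) (env : seq V) (e : zmod_expr) : V :=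
  match e with
  | ZAtom i => nth 0 env i
  | ZZero => 0
  | ZAdd e1 e2 => zmod_eval env e1 + zmod_eval env e2
  | ZOpp e1 => - zmod_eval env e1
  end.

Fixpoint zmod_coef (e : zmod_expr) (j : nat) : int :=
  match e with
  | ZAtom i => if i == j then 1 else 0
  | ZZero => 0
  | ZAdd e1 e2 => zmod_coef e1 j + zmod_coef e2 j
  | ZOpp e1 => - zmod_coef e1 j
  end.

Lemma zmod_evalE (V : zmodType) (env : seq V) e :
  zmod_eval env e = \sum_(j < size env) env`_j *~ zmod_coef e j.
Proof.
elim: e => [i | | e1 IH1 e2 IH2 | e1 IH1] /=.
- have [lt_i | le_i] := ltnP i (size env).
    rewrite (bigD1 (Ordinal lt_i)) //= eqxx mulr1z big1 ?addr0 // => j neq_ji.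
    case: eqP => [eq_ij | _]; last exact: mulr0z.
    by case/eqP: neq_ji; apply: val_inj.
  rewrite nth_default // big1 // => j _; case: eqP => [eq_ij | _]; last exact: mulr0z.
  by move: (ltn_ord j); rewrite -eq_ij ltnNge le_i.
- by rewrite big1 // => j _; rewrite mulr0z.
- by rewrite IH1 IH2 -big_split; apply: eq_bigr => j _; rewrite mulrzDr.
- by rewrite IH1 -sumrN; apply: eq_bigr => j _; rewrite mulrNz.
Qed.

(* The size is passed separately so that [vm_compute] never evaluates the atoms. *)
Lemma zmod_eval_eq (V : zmodType) (env : seq V) N e1 e2 : size env = N ->
  all (fun j => zmod_coef e1 j == zmod_coef e2 j) (iota 0 N) ->
  zmod_eval env e1 = zmod_eval env e2.
Proof.
move=> <- /allP same; rewrite !zmod_evalE; apply: eq_bigr => j _.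
by rewrite (eqP (same j _)) // mem_iota /= ltn_ord.
Qed.

(* Atoms are compared up to unification: equal matrix products may differ in their
   instance arguments. *)
Ltac zmod_index x env :=
  match env with
  | ?y :: _ => let _ := constr:(ltac:(unify x y; exact I) : True) in constr:(O)
  | _ :: ?env' => let k := zmod_index x env' in constr:(S k)
  end.

Ltac zmod_mem x env :=
  match env with
  | ?y :: _ => let _ := constr:(ltac:(unify x y; exact I) : True) in constr:(true)
  | _ :: ?env' => zmod_mem x env'
  | _ => constr:(false)
  end.

Ltac zmod_atoms t env :=
  lazymatch t with
  | (?a + ?b)%R => let env := zmod_atoms a env in zmod_atoms b env
  | (- ?a)%R => zmod_atoms a env
  | 0%R => env
  | _ => let known := zmod_mem t env in
         lazymatch known with true => env | false => constr:(t :: env) end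
  end.

Ltac zmod_reify t env :=
  lazymatch t with
  | (?a + ?b)%R => let ea := zmod_reify a env in let eb := zmod_reify b env in
                   constr:(ZAdd ea eb)
  | (- ?a)%R => let ea := zmod_reify a env in constr:(ZOpp ea)
  | 0%R => constr:(ZZero)
  | _ => let k := zmod_index t env in constr:(ZAtom k)
  end.

Ltac zmod_eq :=
  lazymatch goal with
  | |- @eq ?T ?L ?R =>
    let env := zmod_atoms L (@nil T) in
    let env := zmod_atoms R env in
    let eL := zmod_reify L env in
    let eR := zmod_reify R env in
    let N := eval lazy in (size env) in
    change (zmod_eval env eL = zmod_eval env eR);
    apply: (@zmod_eval_eq _ env N); [reflexivity | vm_compute; reflexivity]
  end.

(* Square matrices of abstract size are not a ringType (and are not commutative), so
   products are expanded and the result is compared in the free Z-module on monomials. *)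
Ltac mx_abel :=
  rewrite ?(mulmx1, mul1mx, mulmx0, mul0mx, mulmxDl, mulmxDr, mulmxBl, mulmxBr,
            mulNmx, mulmxN, mulmxA, opprK, opprD, opprB);
  zmod_eq.

(** * Fully faithful, essentially surjective functors *)

Record pcategory_laws (E : PCat) : Prop := PCategoryLaws {
  pc_id_hom : forall x : pc_ob E, pc_isob x -> pc_ishom x x (pc_id x);
  pc_comp_hom : forall (x y z : pc_ob E) f g, pc_isob x -> pc_isob y -> pc_isob z ->
    pc_ishom x y f -> pc_ishom y z g -> pc_ishom x z (pc_comp f g);
  pc_compA : forall f g h : pc_mor E, pc_comp (pc_comp f g) h = pc_comp f (pc_comp g h);
  pc_comp1m : forall (x : pc_ob E) f, pc_comp (pc_id x) f = f;
  pc_compm1 : forall (x : pc_ob E) f, pc_comp f (pc_id x) = f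
}.

Lemma choice_on (A B : Type) (P : A -> Prop) (R : A -> B -> Prop) : inhabited B ->
  (forall a, P a -> exists b, R a b) -> exists f : A -> B, forall a, P a -> R a (f a).
Proof.
move=> [b0] hR; apply: (functional_choice (fun a b => P a -> R a b)) => a.
by case: (classic (P a)) => [/hR [b Rab] | nPa]; [exists b | exists b0].
Qed.

Section FullyFaithful.
Variables (C D : PCat) (Fo : pc_ob C -> pc_ob D).
Variable Fm : pc_ob C -> pc_ob C -> pc_mor C -> pc_mor D.
Hypotheses (catC : pcategory_laws C) (catD : pcategory_laws D) (funF : is_functor Fo Fm).
Hypothesis faithF : forall x y f g, pc_isob x -> pc_isob y ->
  pc_ishom x y f -> pc_ishom x y g -> Fm x y f = Fm x y g -> f = g.

Local Notation "f ;; g" := (pc_comp f g) (at level 40, left associativity).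

Lemma Fo_ob x : pc_isob x -> pc_isob (Fo x).
Proof. by case: funF => + _ _ _; apply. Qed.

Lemma Fm_hom x y f :
  pc_isob x -> pc_isob y -> pc_ishom x y f -> pc_ishom (Fo x) (Fo y) (Fm x y f).
Proof. by case: funF => _ + _ _; apply. Qed.

Lemma Fm_id x : pc_isob x -> Fm x x (pc_id x) = pc_id (Fo x).
Proof. by case: funF => _ _ + _; apply. Qed.

Lemma Fm_comp x y z f g : pc_isob x -> pc_isob y -> pc_isob z ->
  pc_ishom x y f -> pc_ishom y z g -> Fm x z (f ;; g) = Fm x y f ;; Fm y z g.
Proof. by case: funF => _ _ _; apply. Qed.

Section InverseData.
Variables (Go : pc_ob D -> pc_ob C) (eps eps' : pc_ob D -> pc_mor D).
Variable lift : pc_ob C -> pc_ob C -> pc_mor D -> pc_mor C.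
Hypothesis Go_spec : forall z, pc_isob z ->
  [/\ pc_isob (Go z), pc_ishom (Fo (Go z)) z (eps z), pc_ishom z (Fo (Go z)) (eps' z),
      eps z ;; eps' z = pc_id (Fo (Go z)) & eps' z ;; eps z = pc_id z].
Hypothesis lift_spec : forall x y h, pc_isob x -> pc_isob y -> pc_ishom (Fo x) (Fo y) h ->
  pc_ishom x y (lift x y h) /\ Fm x y (lift x y h) = h.

Let Gm z z' g := lift (Go z) (Go z') (eps z ;; g ;; eps' z').

Lemma Gm_spec z z' g : pc_isob z -> pc_isob z' -> pc_ishom z z' g ->
  pc_ishom (Go z) (Go z') (Gm z z' g) /\ Fm (Go z) (Go z') (Gm z z' g) = eps z ;; g ;; eps' z'.
Proof.
move=> z_ob z'_ob g_hom; have [Gz_ob eps_hom _ _ _] := Go_spec z_ob.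
have [Gz'_ob _ eps'_hom _ _] := Go_spec z'_ob.
have [FGz_ob FGz'_ob] := (Fo_ob Gz_ob, Fo_ob Gz'_ob).
apply: lift_spec => //; apply: (pc_comp_hom catD FGz_ob z'_ob FGz'_ob) eps'_hom.
exact: (pc_comp_hom catD FGz_ob z_ob z'_ob) eps_hom g_hom.
Qed.

Lemma Gm_functor : is_functor Go Gm.
Proof.
split.
- by move=> z /Go_spec[].
- by move=> z z' g z_ob z'_ob /(Gm_spec z_ob z'_ob)[].
- move=> z z_ob.
  have [Gz_ob _ _ ee' _] := Go_spec z_ob.
  have [Gm_hom FGm] := Gm_spec z_ob z_ob (pc_id_hom catD z_ob).
  apply: (faithF Gz_ob Gz_ob Gm_hom (pc_id_hom catC Gz_ob)).
  by rewrite FGm Fm_id // (pc_compm1 catD) ee'.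
move=> z z' z'' g g' z_ob z'_ob z''_ob g_hom g'_hom.
have [Gz_ob _ _ _ _] := Go_spec z_ob; have [Gz'_ob _ _ _ e'e] := Go_spec z'_ob.
have [Gz''_ob _ _ _ _] := Go_spec z''_ob.
have [h1 F1] := Gm_spec z_ob z'_ob g_hom; have [h2 F2] := Gm_spec z'_ob z''_ob g'_hom.
have [h12 F12] := Gm_spec z_ob z''_ob (pc_comp_hom catD z_ob z'_ob z''_ob g_hom g'_hom).
apply: (faithF Gz_ob Gz''_ob h12 (pc_comp_hom catC Gz_ob Gz'_ob Gz''_ob h1 h2)).
rewrite F12 (Fm_comp Gz_ob Gz'_ob Gz''_ob h1 h2) F1 F2 !(pc_compA catD).
by rewrite -[eps' z' ;; (eps z' ;; _)](pc_compA catD) e'e (pc_comp1m catD).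
Qed.

Let eta x := lift x (Go (Fo x)) (eps' (Fo x)).

Lemma eta_nat_iso : is_nat_iso (fun x => x) (fun x => Go (Fo x))
  (fun _ _ f => f) (fun x y f => Gm (Fo x) (Fo y) (Fm x y f)) eta.
Proof.
split=> [x x_ob | x y f x_ob y_ob f_hom].
  have [GFx_ob eps_hom eps'_hom ee' e'e] := Go_spec (Fo_ob x_ob).
  have [eta_hom F_eta] := lift_spec x_ob GFx_ob eps'_hom.
  have [eta'_hom F_eta'] := lift_spec GFx_ob x_ob eps_hom.
  split=> //; exists (lift (Go (Fo x)) x (eps (Fo x))); split=> //; split.
    apply: (faithF x_ob x_ob (pc_comp_hom catC x_ob GFx_ob x_ob eta_hom eta'_hom)
                              (pc_id_hom catC x_ob)).
    by rewrite (Fm_comp _ GFx_ob) // F_eta F_eta' e'e Fm_id.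
  apply: (faithF GFx_ob GFx_ob (pc_comp_hom catC GFx_ob x_ob GFx_ob eta'_hom eta_hom)
                                (pc_id_hom catC GFx_ob)).
  by rewrite (Fm_comp _ x_ob) // F_eta F_eta' ee' Fm_id.
have [GFx_ob _ eps'x_hom _ e'e] := Go_spec (Fo_ob x_ob).
have [GFy_ob _ eps'y_hom _ _] := Go_spec (Fo_ob y_ob).
have [ex_hom F_ex] := lift_spec x_ob GFx_ob eps'x_hom.
have [ey_hom F_ey] := lift_spec y_ob GFy_ob eps'y_hom.
have [G_hom FG] := Gm_spec (Fo_ob x_ob) (Fo_ob y_ob) (Fm_hom x_ob y_ob f_hom).
apply: (faithF x_ob GFy_ob (pc_comp_hom catC x_ob y_ob GFy_ob f_hom ey_hom)
                            (pc_comp_hom catC x_ob GFx_ob GFy_ob ex_hom G_hom)).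
rewrite (Fm_comp x_ob y_ob) // (Fm_comp x_ob GFx_ob) // F_ex F_ey FG !(pc_compA catD).
by rewrite -[eps' (Fo x) ;; (eps (Fo x) ;; _)](pc_compA catD) e'e (pc_comp1m catD).
Qed.

Lemma eps_nat_iso : is_nat_iso (fun y => Fo (Go y)) (fun y => y)
  (fun y y' g => Fm (Go y) (Go y') (Gm y y' g)) (fun _ _ g => g) eps.
Proof.
split=> [z z_ob | z z' g z_ob z'_ob g_hom].
  by have [_ eps_hom eps'_hom ee' e'e] := Go_spec z_ob; split=> //; exists (eps' z).
have [_ FG] := Gm_spec z_ob z'_ob g_hom; have [_ _ _ _ e'e] := Go_spec z'_ob.
by rewrite FG !(pc_compA catD) e'e (pc_compm1 catD).
Qed.

Lemma equivalence_of_inverse_data : is_equivalence Fo Fm.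
Proof.
split=> //; exists Go, Gm, eta, eps.
by split; [exact: Gm_functor | exact: eta_nat_iso | exact: eps_nat_iso].
Qed.

End InverseData.

Hypothesis fullF : forall x y h, pc_isob x -> pc_isob y -> pc_ishom (Fo x) (Fo y) h ->
  exists f, pc_ishom x y f /\ Fm x y f = h.
Hypothesis esurjF : forall z, pc_isob z -> exists x e e',
  [/\ pc_isob x, pc_ishom (Fo x) z e, pc_ishom z (Fo x) e',
      e ;; e' = pc_id (Fo x) & e' ;; e = pc_id z].

Lemma fully_faithful_esurj_equivalence : inhabited (pc_ob C) -> is_equivalence Fo Fm.
Proof.
move=> [x0].
have /(choice_on (inhabits (x0, pc_id (Fo x0), pc_id (Fo x0)))) [G G_spec] :
    forall z, pc_isob z -> exists t : pc_ob C * pc_mor D * pc_mor D,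
      [/\ pc_isob t.1.1, pc_ishom (Fo t.1.1) z t.1.2, pc_ishom z (Fo t.1.1) t.2,
          t.1.2 ;; t.2 = pc_id (Fo t.1.1) & t.2 ;; t.1.2 = pc_id z].
  by move=> z /esurjF [x [e [e' spec]]]; exists (x, e, e').
have /(choice_on (inhabits (pc_id x0))) [L L_spec] :
    forall t : pc_ob C * pc_ob C * pc_mor D,
      [/\ pc_isob t.1.1, pc_isob t.1.2 & pc_ishom (Fo t.1.1) (Fo t.1.2) t.2] ->
    exists f, pc_ishom t.1.1 t.1.2 f /\ Fm t.1.1 t.1.2 f = t.2.
  by move=> [[x y] h] [/= x_ob y_ob h_hom]; apply: fullF.
apply: (equivalence_of_inverse_data (Go := fun z => (G z).1.1) (eps := fun z => (G z).1.2)
          (eps' := fun z => (G z).2) (lift := fun x y h => L (x, y, h))) => [z /G_spec //|].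
by move=> x y h x_ob y_ob h_hom; apply: (L_spec (x, y, h)).
Qed.

End FullyFaithful.

(** * The filtration by A ⊗ W_{-k}End(V) *)

Section Filtered.
Variables (K : fieldType) (n : nat) (W : int -> 'M[K]_n).
Hypothesis hW : filtration W.

Lemma filtration_mono i j : (i <= j)%R -> (W i <= W j)%MS.
Proof.
move=> le_ij; have -> : j = i + (`|j - i|%N)%:Z by lia.
elim: `|j - i|%N => [|m IHm]; first by rewrite addr0.
apply: submx_trans IHm _; have -> : i + m.+1%:Z = i + m%:Z + 1 by lia.
exact: hW.1.
Qed.

Lemma W_End_subspace k : subspace_pred (W_End W k).
Proof.
split=> [i | c f g hf hg i]; first by rewrite mulmx0 sub0mx.
by rewrite mulmxDr -scalemxAr addmx_sub ?scalemx_sub.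
Qed.

Lemma W_EndM k l f g : W_End W k f -> W_End W l g -> W_End W (k + l) (f *m g).
Proof.
move=> hf hg i; rewrite mulmxA addrA.
exact: submx_trans (submxMr _ (hf i)) (hg _).
Qed.

Lemma W_End_mono k l f : (k <= l)%R -> W_End W k f -> W_End W l f.
Proof. by move=> le_kl hf i; apply: submx_trans (hf i) _; apply: filtration_mono; lia. Qed.

Lemma W_End_nilpotent : exists L : nat, forall k f, (L <= k)%N -> W_End W (- k%:Z) f -> f = 0.
Proof.
have [_ [[a Wa0] [b Wb1]]] := hW.
exists `|b - a|%N => k f le_Lk hf; apply/eqP; rewrite -submx0.
apply: submx_trans (submx_trans _ (filtration_mono (_ : b - k%:Z <= a)%R)) Wa0; last by lia.
by apply: submx_trans (hf b); rewrite -{1}[f]mul1mx submxMr.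
Qed.

Lemma graded_basis k : exists r (e L : 'I_r -> 'M[K]_n),
  [/\ forall i, W_End W (- k%:Z) (e i),
      forall i f, W_End W (- k.+1%:Z) f -> mxpair (L i) f = 0 &
      forall f, W_End W (- k%:Z) f -> W_End W (- k.+1%:Z) (f - \sum_i mxpair (L i) f *: e i)].
Proof.
apply: quotient_basis; try exact: W_End_subspace.
by move=> f; apply: W_End_mono; lia.
Qed.

Definition in_filt (A : DGA K) k p (M : 'M[A]_n) := in_tens A p (W_End W (- k%:Z)) M.

Lemma in_filt_nilpotent :
  exists L : nat, forall (A : DGA K) k p (M : 'M[A]_n), (L <= k)%N -> in_filt k p M -> M = 0.
Proof.
have [L nilL] := W_End_nilpotent; exists L => A k p M le_Lk hM.
exact: in_tens_eq0 (in_tens_sub (fun f => nilL k f le_Lk) hM).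
Qed.

Definition curvature (A : DGA K) (w : 'M[A]_n) := dmx w + w *m w.
Definition gauge_defect (A : DGA K) (x y a : 'M[A]_n) := dmx a + x *m a - a *m y.
Definition unipotent (A : DGA K) (a : 'M[A]_n) := exists N, in_filt 1 0 N /\ a = 1%:M + N.
Definition mc_obj (A : DGA K) (w : 'M[A]_n) := in_filt 1 1 w /\ curvature w = 0.

Section OneDGA.
Variable A : DGA K.
Implicit Types (w x y M N a : 'M[A]_n).

Lemma in_filt_mono k l p M : (k <= l)%N -> in_filt l p M -> in_filt k p M.
Proof. by move=> le_kl; apply: in_tens_sub => f; apply: W_End_mono; lia. Qed.

Lemma in_filtM k l p q M N :
  in_filt k p M -> in_filt l q N -> in_filt (k + l) (p + q) (M *m N).
Proof. by apply: in_tensM => f g /W_EndM gf /gf; congr W_End; lia. Qed.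

Lemma in_filtM1l k p q w M :
  in_filt 1 q w -> in_filt k p M -> in_filt k.+1 (q + p) (w *m M).
Proof. exact: in_filtM. Qed.

Lemma in_filtM1r k p q M w :
  in_filt k p M -> in_filt 1 q w -> in_filt k.+1 (p + q) (M *m w).
Proof. by move=> hM hw; rewrite -addn1; apply: in_filtM. Qed.

Lemma unipotent_homog a : unipotent a -> homog_mx 0 a.
Proof. by case=> N [hN ->]; apply: homog_mxD; [exact: homog_mx1 | exact: in_tens_homog_mx hN]. Qed.

Lemma curvature_d x : homog_mx 1 x -> dmx (curvature x) = curvature x *m x - x *m curvature x.
Proof. by move=> hx; rewrite raddfD /= dmxK (dmxM_odd _ hx); mx_abel. Qed.

Lemma gauge_defect_d x y a : homog_mx 1 x -> homog_mx 1 y -> homog_mx 0 a ->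
  dmx (gauge_defect x y a) = curvature x *m a - a *m curvature y
                             - (x *m gauge_defect x y a + gauge_defect x y a *m y).
Proof.
move=> hx hy ha; rewrite /gauge_defect /curvature !raddfB !raddfD /= dmxK.
by rewrite (dmxM_odd _ hx) (dmxM_even _ ha); mx_abel.
Qed.

Lemma Fobj_mc_obj w : (2%:R : K) != 0 -> Fobj W w <-> mc_obj w.
Proof.
move=> two_nz; rewrite /Fobj /mc_obj.
suff -> : scalemxK A 2%:R^-1 (gbracket 1 1 w w) = w *m w by [].
rewrite /gbracket muln1; apply/matrixP=> i j; rewrite !mxE expr1 scaleN1r opprK.
by rewrite -mulr2n -scaler_nat scalerA mulVf // scale1r.
Qed.

Lemma Fhom_d x y a : Fhom W x y a -> dmx a = a *m y - x *m a.
Proof. by case=> _ /eqP; rewrite subr_eq0 => /eqP <-; rewrite addrK. Qed.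

Lemma Fhom_homog x y a : Fhom W x y a -> homog_mx 0 a.
Proof. by case=> /unipotent_homog. Qed.

Lemma Fhom_id x : Fhom W x x 1%:M.
Proof.
split; first by exists 0; split; [exact: in_tens0 | rewrite addr0].
by rewrite dmx1 mulmx1 mul1mx add0r subrr.
Qed.

Lemma Fhom_comp x y z a b : Fhom W x y a -> Fhom W y z b -> Fhom W x z (a *m b).
Proof.
move=> hab hbc; split.
  case: hab => -[N [hN ->]] _; case: hbc => -[N' [hN' ->]] _.
  exists (N + N' + N *m N'); split; last by mx_abel.
  apply: in_tensD; first exact: in_tensD.
  exact: (in_filt_mono (l := 2)) (in_filtM hN hN').
by rewrite (dmxM_even _ (Fhom_homog hab)) (Fhom_d hab) (Fhom_d hbc); mx_abel.
Qed.

Lemma unipotent_inv N : in_filt 1 0 N ->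
  exists N', [/\ in_filt 1 0 N', (1%:M + N) *m (1%:M + N') = 1%:M
                                & (1%:M + N') *m (1%:M + N) = 1%:M].
Proof.
move=> hN; have [L nilL] := in_filt_nilpotent.
pose pw m := iter m (mulmx (- N)) (1%:M : 'M[A]_n).
pose geo m := \sum_(j < m) pw j.
have pwSr m : pw m *m (- N) = pw m.+1.
  by elim: m => [|m IHm]; rewrite /= ?mul1mx ?mulmx1 // -mulmxA IHm.
have pw_filt m : in_filt m.+1 0 (pw m.+1).
  elim: m => [|m IHm]; first by rewrite /= mulmx1; apply: in_tensN.
  by have := in_filtM (in_tensN hN) IHm.
have pw_nil : pw L.+1 = 0 by apply: (nilL _ L.+1 0).
have geo_l m : (1%:M + N) *m geo m = 1%:M - pw m.
  elim: m => [|m IHm]; first by rewrite /geo big_ord0 mulmx0 subrr.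
  by rewrite /geo big_ord_recr mulmxDr IHm /=; mx_abel.
have geo_r m : geo m *m (1%:M + N) = 1%:M - pw m.
  elim: m => [|m IHm]; first by rewrite /geo big_ord0 mul0mx subrr.
  by rewrite /geo big_ord_recr mulmxDl IHm -(pwSr m); mx_abel.
have geoE : 1%:M + (geo L.+1 - 1%:M) = geo L.+1 by rewrite addrC subrK.
exists (geo L.+1 - 1%:M); rewrite geoE geo_l geo_r pw_nil subr0; split=> //.
rewrite /geo big_ord_recl addrAC subrr add0r; apply: in_tens_sum => j _.
exact: in_filt_mono (pw_filt j).
Qed.

Lemma Fhom_inv x y a : Fhom W x y a ->
  exists a', [/\ Fhom W y x a', a *m a' = 1%:M & a' *m a = 1%:M].
Proof.
move=> hxy; have [[N [hN eaN]] _] := hxy.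
have [N' [hN' aa' a'a]] := unipotent_inv hN; rewrite -eaN in aa' a'a.
exists (1%:M + N'); split=> //; split; first by exists N'.
have da' : dmx (1%:M + N') = - ((1%:M + N') *m dmx a *m (1%:M + N')).
  have := dmxM_even (1%:M + N') (Fhom_homog hxy); rewrite aa' dmx1 => /eqP.
  rewrite eq_sym addr_eq0 => /eqP /(congr1 (mulmx (1%:M + N'))) h.
  by rewrite mulmxN !mulmxA a'a mul1mx in h; rewrite h opprK.
rewrite da' (Fhom_d hxy) mulmxBr mulmxBl !mulmxA a'a mul1mx.
by rewrite -[_ *m x *m a *m _]mulmxA aa' mulmx1; mx_abel.
Qed.

Lemma Fcat_laws : pcategory_laws (Fcat A W).
Proof.
split=> /= [x _ | x y z a b _ _ _ | a b c | _ a | _ a].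
- exact: Fhom_id.
- exact: Fhom_comp.
- by symmetry; apply: mulmxA.
- exact: mul1mx.
- exact: mulmx1.
Qed.

End OneDGA.

(** * The functor F_gr(phi) *)

Section Morphism.
Variables (A1 A2 : DGA K) (phi : A1 -> A2).
Hypothesis hphi : DGA_morphism phi.

Let phi_linear : linear phi. Proof. by case: hphi. Qed.
Let phi_multiplicative : monoid_morphism phi. Proof. by case: hphi => _ ? ? _ _; split. Qed.
HB.instance Definition _ := GRing.isLinear.Build K A1 A2 *:%R phi phi_linear.
HB.instance Definition _ := GRing.isMonoidMorphism.Build A1 A2 phi phi_multiplicative.

Local Notation Phi := (map_mx phi).
Implicit Types (M N : 'M[A1]_n).

Let phiZ (c : K) (x : A1) : phi (c *: x) = c *: phi x.
Proof. exact: linearZ_LR. Qed.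

Lemma map_dmx M : Phi (dmx M) = dmx (Phi M).
Proof. by apply/matrixP=> i j; rewrite !mxE; case: hphi. Qed.

Lemma map_tens a (f : 'M[K]_n) : Phi (tens A1 a f) = tens A2 (phi a) f.
Proof. by apply/matrixP=> i j; rewrite !mxE; apply: phiZ. Qed.

Lemma mxpairA_map L M : phi (mxpairA L M) = mxpairA L (Phi M).
Proof.
rewrite /mxpairA raddf_sum; apply: eq_bigr => i _; rewrite raddf_sum.
by apply: eq_bigr => j _; rewrite mxE; apply: phiZ.
Qed.

Lemma in_filt_map k p M : in_filt k p M -> in_filt k p (Phi M).
Proof.
move=> [r [a [f [h ->]]]]; rewrite map_mx_sum; apply: in_tens_sum => j _.
rewrite map_tens; case: (h j) => ha hf; apply: in_tens_tens => //.
by case: hphi => _ _ _ + _; apply.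
Qed.

(* Coordinates in a basis of Gr_{-k}End(V) are cocycles of A ([mxpairA_cocycle]), so on
   the graded piece A ⊗ Gr_{-k}End(V) the map phi ⊗ id inherits the cohomological
   properties of phi. *)
Lemma gr_Hinj0 k M : Hinj phi 0 ->
  in_filt k 0 M -> in_filt k.+1 1 (dmx M) -> in_filt k.+1 0 (Phi M) -> in_filt k.+1 0 M.
Proof.
move=> inj0 hM hdM hPM; have [r [e [L [_ vanL quotL]]]] := graded_basis k.
suff coord0 i : mxpairA (L i) M = 0.
  have := in_tens_quotient quotL hM.
  by rewrite big1 ?subr0 // => i _; rewrite coord0 tens0l.
apply: inj0; first exact: mxpairA_cocycle (vanL i) (in_tens_homog_mx hM) hdM.
by rewrite /coboundary mxpairA_map; apply: mxpairA_vanish (vanL i) hPM.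
Qed.

Lemma gr_HinjS k p M : Hinj phi p.+1 ->
  in_filt k p.+1 M -> in_filt k.+1 p.+2 (dmx M) ->
  (exists Q R, [/\ in_filt k p Q, in_filt k.+1 p.+1 R & Phi M = dmx Q + R]) ->
  exists N, in_filt k p N /\ in_filt k.+1 p.+1 (M - dmx N).
Proof.
move=> injS hM hdM [Q [R [hQ hR PME]]]; have [r [e [L [eW vanL quotL]]]] := graded_basis k.
have /fin_all_exists [y hy] i : exists y, homog A1 p y /\ mxpairA (L i) M = dga_d A1 y.
  apply: injS; first exact: mxpairA_cocycle (vanL i) (in_tens_homog_mx hM) hdM.
  exists (mxpairA (L i) Q); split; first exact/mxpairA_homog/(in_tens_homog_mx hQ).
  by rewrite mxpairA_map PME raddfD /= (mxpairA_vanish (vanL i) hR) addr0 mxpairA_dmx.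
exists (\sum_i tens A1 (y i) (e i)); split.
  by apply: in_tens_sum => i _; apply: in_tens_tens; [case: (hy i) | apply: eW].
rewrite raddf_sum /=; under eq_bigr do rewrite dmx_tens -(proj2 (hy _)).
exact: in_tens_quotient quotL hM.
Qed.

Lemma gr_Hsurj0 k (M : 'M[A2]_n) : Hsurj phi 0 ->
  in_filt k 0 M -> in_filt k.+1 1 (dmx M) ->
  exists N, [/\ in_filt k 0 N, dmx N = 0 & in_filt k.+1 0 (Phi N - M)].
Proof.
move=> surj0 hM hdM; have [r [e [L [eW vanL quotL]]]] := graded_basis k.
have /fin_all_exists [y hy] i : exists y, cocycle A1 0 y /\ phi y = mxpairA (L i) M.
  have [y [zy /eqP]] := surj0 _ (mxpairA_cocycle (vanL i) (in_tens_homog_mx hM) hdM).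
  by rewrite subr_eq0 => /eqP; exists y.
exists (\sum_i tens A1 (y i) (e i)); split.
- by apply: in_tens_sum => i _; apply: in_tens_tens; [case: (hy i) => -[] | apply: eW].
- by rewrite raddf_sum big1 //= => i _; rewrite dmx_tens (proj2 (proj1 (hy i))) tens0l.
rewrite map_mx_sum; under eq_bigr do rewrite map_tens (proj2 (hy _)).
by rewrite -opprB; apply: in_tensN; apply: in_tens_quotient quotL hM.
Qed.

Lemma gr_HsurjS k p (M : 'M[A2]_n) : Hsurj phi p.+1 ->
  in_filt k p.+1 M -> in_filt k.+1 p.+2 (dmx M) ->
  exists N Q, [/\ in_filt k p.+1 N, dmx N = 0, in_filt k p Q
                & in_filt k.+1 p.+1 (Phi N - M - dmx Q)].
Proof.
move=> surjS hM hdM; have [r [e [L [eW vanL quotL]]]] := graded_basis k.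
have /fin_all_exists [yq hyq] i : exists yq : A1 * A2,
    [/\ cocycle A1 p.+1 yq.1, homog A2 p yq.2 & phi yq.1 - mxpairA (L i) M = dga_d A2 yq.2].
  have [y [zy [q [hq eq]]]] := surjS _ (mxpairA_cocycle (vanL i) (in_tens_homog_mx hM) hdM).
  by exists (y, q).
exists (\sum_i tens A1 (yq i).1 (e i)), (\sum_i tens A2 (yq i).2 (e i)); split.
- by apply: in_tens_sum => i _; apply: in_tens_tens; [case: (hyq i) => -[] | apply: eW].
- rewrite raddf_sum big1 //= => i _.
  by rewrite dmx_tens; case: (hyq i) => -[_ ->]; rewrite tens0l.
- by apply: in_tens_sum => i _; apply: in_tens_tens; [case: (hyq i) | apply: eW].
have -> : Phi (\sum_i tens A1 (yq i).1 (e i)) - M - dmx (\sum_i tens A2 (yq i).2 (e i)) =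
    - (M - \sum_i tens A2 (mxpairA (L i) M) (e i)).
  rewrite map_mx_sum raddf_sum /= addrAC -sumrB opprB; congr (_ - _).
  apply: eq_bigr => i _; rewrite map_tens dmx_tens -tensBl.
  by case: (hyq i) => _ _ <-; rewrite subKr.
by apply: in_tensN; apply: in_tens_quotient quotL hM.
Qed.

Lemma map_mc_obj x : mc_obj x -> mc_obj (Phi x).
Proof.
case=> hx curv0; split; first exact: in_filt_map.
by rewrite /curvature -map_dmx -map_mxM -map_mxD [dmx x + _]curv0 map_mx0.
Qed.

Lemma map_Fhom x y a : Fhom W x y a -> Fhom W (Phi x) (Phi y) (Phi a).
Proof.
case=> -[N [hN ->]] defect0; split.
  by exists (Phi N); split; [exact: in_filt_map | rewrite map_mxD map_mx1].
by rewrite -map_dmx -!map_mxM -map_mxD -map_mxB defect0 map_mx0.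
Qed.

Lemma map_faithful x y a a' : Hinj phi 0 -> mc_obj x -> mc_obj y ->
  Fhom W x y a -> Fhom W x y a' -> Phi a = Phi a' -> a = a'.
Proof.
move=> inj0 [hx _] [hy _] ha ha' Pa; have [L nilL] := in_filt_nilpotent.
suff approx k : in_filt k.+1 0 (a - a').
  by apply/eqP; rewrite -subr_eq0; apply/eqP; apply: (nilL _ L.+1 0).
elim: k => [|k IHk].
  case: ha => -[N [hN ->]] _; case: ha' => -[N' [hN' ->]] _.
  by rewrite opprD addrACA subrr add0r; apply: in_tensB.
apply: (gr_Hinj0 inj0 IHk); last by rewrite map_mxB Pa subrr; apply: in_tens0.
have -> : dmx (a - a') = (a - a') *m y - x *m (a - a').
  by rewrite raddfB /= (Fhom_d ha) (Fhom_d ha'); mx_abel.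
by apply: in_tensB; [exact: in_filtM1r IHk hy | exact: in_filtM1l hx IHk].
Qed.

Lemma map_full_step x y b k a : Hsurj phi 0 -> Hinj phi 1 ->
  mc_obj x -> mc_obj y -> Fhom W (Phi x) (Phi y) b -> unipotent a ->
  in_filt k.+1 1 (gauge_defect x y a) -> in_filt k.+1 0 (Phi a - b) ->
  exists a', [/\ unipotent a', in_filt k.+2 1 (gauge_defect x y a') & in_filt k.+2 0 (Phi a' - b)].
Proof.
move=> surj0 inj1 [hx curv_x] [hy curv_y] [_ defect_b] ua he hu.
set e := gauge_defect x y a; set u := Phi a - b.
have hde : in_filt k.+2 2 (dmx e).
  rewrite (gauge_defect_d (in_tens_homog_mx hx) (in_tens_homog_mx hy) (unipotent_homog ua)).
  rewrite curv_x curv_y mul0mx mulmx0 subrr sub0r; apply: in_tensN.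
  by apply: in_tensD; [exact: in_filtM1l hx he | exact: in_filtM1r he hy].
have hR : in_filt k.+2 1 (Phi x *m u - u *m Phi y).
  apply: in_tensB; first exact: in_filtM1l (in_filt_map hx) hu.
  exact: in_filtM1r hu (in_filt_map hy).
have Phi_e : Phi e = dmx u + (Phi x *m u - u *m Phi y).
  rewrite /e /u /gauge_defect map_mxB map_mxD !map_mxM map_dmx -[LHS]subr0 -{1}defect_b.
  by rewrite [dmx (_ - _)]raddfB /=; mx_abel.
have [N [hN heN]] : exists N, in_filt k.+1 0 N /\ in_filt k.+2 1 (e - dmx N).
  by apply: (gr_HinjS inj1 he hde); exists u, (Phi x *m u - u *m Phi y).
pose u' := u - Phi N.
have hu' : in_filt k.+1 0 u' by apply: in_tensB; last exact: in_filt_map.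
have hdu' : in_filt k.+2 1 (dmx u').
  have -> : dmx u' = Phi (e - dmx N) - (Phi x *m u - u *m Phi y).
    by rewrite /u' raddfB /= -map_dmx map_mxB Phi_e; mx_abel.
  by apply: in_tensB => //; apply: in_filt_map.
have [N0 [hN0 dN0 hPN0]] := gr_Hsurj0 surj0 hu' hdu'.
exists (a - N - N0); split.
- case: ua => Na [hNa ->]; exists (Na - N - N0); split; last by mx_abel.
  by apply: in_tensB; [apply: in_tensB |]; [| exact: in_filt_mono hN | exact: in_filt_mono hN0].
- have -> : gauge_defect x y (a - N - N0) = (e - dmx N) - x *m (N + N0) + (N + N0) *m y.
    by rewrite /e /gauge_defect !raddfB /= dN0; mx_abel.
  have hNN0 : in_filt k.+1 0 (N + N0) by apply: in_tensD.
  apply: in_tensD; last exact: in_filtM1r hNN0 hy.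
  by apply: in_tensB => //; exact: in_filtM1l hx hNN0.
- have -> : Phi (a - N - N0) - b = - (Phi N0 - u') by rewrite /u' /u !map_mxB; mx_abel.
  exact: in_tensN.
Qed.

Lemma map_full x y b : Hsurj phi 0 -> Hinj phi 1 -> mc_obj x -> mc_obj y ->
  Fhom W (Phi x) (Phi y) b -> exists a, Fhom W x y a /\ Phi a = b.
Proof.
move=> surj0 inj1 objx objy hb; have [L nilL] := in_filt_nilpotent.
have approx k : exists a,
    [/\ unipotent a, in_filt k.+1 1 (gauge_defect x y a) & in_filt k.+1 0 (Phi a - b)].
  elim: k => [|k [a [ua he hu]]]; last exact: map_full_step ua he hu.
  exists 1%:M; split; first by exists 0; split; [exact: in_tens0 | rewrite addr0].
    by rewrite /gauge_defect dmx1 mulmx1 mul1mx add0r; apply: in_tensB; case: objx; case: objy.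
  by case: hb => -[Nb [hNb ->]] _; rewrite map_mx1 opprD addNKr; apply: in_tensN.
have [a [ua he hu]] := approx L; exists a; split; first by split=> //; apply: nilL he.
by apply/eqP; rewrite -subr_eq0; apply/eqP; apply: nilL hu.
Qed.

(* Y corrects the curvature of x by H^2-injectivity, then X0 and Q0 correct the gauge
   defect by H^1-surjectivity. *)
Lemma map_esurj_correction z k x c : Hsurj phi 1 -> Hinj phi 2 -> mc_obj z ->
  in_filt 1 1 x -> unipotent c ->
  in_filt k.+1 2 (curvature x) -> in_filt k.+1 1 (gauge_defect (Phi x) z c) ->
  exists Y X0 Q0, [/\ in_filt k.+1 1 Y, in_filt k.+2 2 (curvature x - dmx Y),
    in_filt k.+1 1 X0 /\ dmx X0 = 0, in_filt k.+1 0 Q0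
    & in_filt k.+2 1 (Phi X0 - (gauge_defect (Phi x) z c - Phi Y) - dmx Q0)].
Proof.
move=> surj1 inj2 [hz curv_z] hx uc hmc he.
set mc := curvature x; set e := gauge_defect (Phi x) z c.
have hPx := in_filt_map hx.
have hdmc : in_filt k.+2 3 (dmx mc).
  rewrite curvature_d; last exact: in_tens_homog_mx hx.
  by apply: in_tensB; [exact: in_filtM1r hmc hx | exact: in_filtM1l hx hmc].
have Phi_mc : Phi mc = curvature (Phi x) by rewrite /mc /curvature map_mxD map_mxM map_dmx.
have [N [hN ec]] := uc.
pose R := Phi x *m e + e *m z - Phi mc *m N.
have hR : in_filt k.+2 2 R.
  apply: in_tensB; last exact: in_filtM1r (in_filt_map hmc) hN.
  by apply: in_tensD; [exact: in_filtM1l hPx he | exact: in_filtM1r he hz].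
have Phi_mcR : Phi mc = dmx e + R.
  rewrite (gauge_defect_d (in_tens_homog_mx hPx) (in_tens_homog_mx hz) (unipotent_homog uc)).
  by rewrite -Phi_mc curv_z mulmx0 subr0 -/e /R {1}ec; mx_abel.
clearbody R. (* otherwise [rewrite] unfolds R *)
have [Y [hY hmcY]] : exists Y, in_filt k.+1 1 Y /\ in_filt k.+2 2 (mc - dmx Y).
  by apply: (gr_HinjS inj2 hmc hdmc); exists e, R.
have he' : in_filt k.+1 1 (e - Phi Y) by apply: in_tensB => //; exact: in_filt_map.
have hde' : in_filt k.+2 2 (dmx (e - Phi Y)).
  have -> : dmx (e - Phi Y) = Phi (mc - dmx Y) - R.
    by rewrite raddfB /= -map_dmx map_mxB /= Phi_mcR; mx_abel.
  by apply: in_tensB => //; exact: in_filt_map.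
have [X0 [Q0 [hX0 dX0 hQ0 hXQ]]] := gr_HsurjS surj1 he' hde'.
by exists Y, X0, Q0.
Qed.

Lemma map_esurj_step z k x c : Hsurj phi 1 -> Hinj phi 2 -> mc_obj z ->
  in_filt 1 1 x -> unipotent c ->
  in_filt k.+1 2 (curvature x) -> in_filt k.+1 1 (gauge_defect (Phi x) z c) ->
  exists x' c', [/\ in_filt 1 1 x', unipotent c', in_filt k.+2 2 (curvature x')
                 & in_filt k.+2 1 (gauge_defect (Phi x') z c')].
Proof.
move=> surj1 inj2 objz hx uc hmc he.
have [Y [X0 [Q0 [hY hmcY [hX0 dX0] hQ0 hXQ]]]] :=
  map_esurj_correction surj1 inj2 objz hx uc hmc he.
have [[hz _] [N [hN ec]]] := (objz, uc).
have hQ0' : in_filt 1 0 Q0 by apply: in_filt_mono hQ0.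
have hD : in_filt k.+1 1 (Y + X0) by apply: in_tensD.
exists (x - (Y + X0)), (c + Q0); split.
- by apply: in_tensB => //; apply: in_filt_mono hD.
- by exists (N + Q0); split; [apply: in_tensD | rewrite ec addrA].
- have -> : curvature (x - (Y + X0)) = (curvature x - dmx Y)
      - (x *m (Y + X0) + (Y + X0) *m x) + (Y + X0) *m (Y + X0).
    by rewrite /curvature raddfB raddfD /= dX0; mx_abel.
  apply: in_tensD; first apply: in_tensB => //.
    by apply: in_tensD; [exact: in_filtM1l hx hD | exact: in_filtM1r hD hx].
  by apply: (in_filt_mono (l := k.+1 + k.+1)); [lia | exact: (in_filtM hD hD)].
have -> : gauge_defect (Phi (x - (Y + X0))) z (c + Q0) =
    - (Phi X0 - (gauge_defect (Phi x) z c - Phi Y) - dmx Q0)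
    + (Phi x *m Q0 - Q0 *m z - (Phi Y + Phi X0) *m (N + Q0)).
  by rewrite /gauge_defect map_mxB map_mxD /= raddfD /= ec; mx_abel.
apply: in_tensD; first exact: in_tensN.
apply: in_tensB; first apply: in_tensB.
- exact: in_filtM1l (in_filt_map hx) hQ0.
- exact: in_filtM1r hQ0 hz.
- have hNQ : in_filt 1 0 (N + Q0) by apply: in_tensD.
  exact: in_filtM1r (in_tensD (in_filt_map hY) (in_filt_map hX0)) hNQ.
Qed.

Lemma map_esurj z : Hsurj phi 1 -> Hinj phi 2 -> mc_obj z ->
  exists x c, mc_obj x /\ Fhom W (Phi x) z c.
Proof.
move=> surj1 inj2 objz; have [L nilL] := in_filt_nilpotent.
have approx k : exists x c, [/\ in_filt 1 1 x, unipotent c,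
    in_filt k.+1 2 (curvature x) & in_filt k.+1 1 (gauge_defect (Phi x) z c)].
  elim: k => [|k [x [c [hx uc hmc he]]]];
    last exact: map_esurj_step surj1 inj2 objz hx uc hmc he.
  exists 0, 1%:M; split; first exact: in_tens0.
  - by exists 0; split; [exact: in_tens0 | rewrite addr0].
  - by rewrite /curvature raddf0 mul0mx addr0; exact: in_tens0.
  rewrite /gauge_defect dmx1 map_mx0 mul0mx mul1mx !add0r.
  by apply: in_tensN; case: objz.
have [x [c [hx uc hmc he]]] := approx L.
by exists x, c; split; split=> //; [apply: nilL hmc | apply: nilL he].
Qed.

Hypothesis two_nz : (2%:R : K) != 0.

Lemma Fcat_map_functor :
  is_functor (C := Fcat A1 W) (D := Fcat A2 W) Phi (fun _ _ => Phi).
Proof.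
split=> /= [x | x y a _ _ | x _ | x y z a b _ _ _ _ _]; last by rewrite map_mxM.
- by move=> /(Fobj_mc_obj _ two_nz) /map_mc_obj /(Fobj_mc_obj _ two_nz).
- exact: map_Fhom.
- exact: map_mx1.
Qed.

Lemma Fcat_map_equivalence :
  Hinj phi 0 -> Hsurj phi 0 -> Hinj phi 1 -> Hsurj phi 1 -> Hinj phi 2 ->
  is_equivalence (C := Fcat A1 W) (D := Fcat A2 W) Phi (fun _ _ => Phi).
Proof.
move=> inj0 surj0 inj1 surj1 inj2.
have objE (A : DGA K) (w : 'M[A]_n) : Fobj W w <-> mc_obj w := Fobj_mc_obj w two_nz.
apply: fully_faithful_esurj_equivalence; try exact: Fcat_laws.
- exact: Fcat_map_functor.
- by move=> /= x y a a' /objE objx /objE objy; apply: map_faithful.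
- by move=> /= x y b /objE objx /objE objy; apply: map_full.
- move=> /= z /objE /(map_esurj surj1 inj2) [x [c [objx hc]]].
  have [c' [hc' cc' c'c]] := Fhom_inv hc.
  by exists x, c, c'; split=> //; apply/objE.
- exact: inhabits 0.
Qed.

End Morphism.
End Filtered.

Lemma Kfld_two_neq0 b : (2%:R : Kfld b) != 0.
Proof. by case: b; rewrite /= pnatr_eq0. Qed.

Theorem corollary10p4 (b : bool) (n : nat) (W : int -> 'M[Kfld b]_n)
  (A1 A2 : DGA (Kfld b)) (phi : A1 -> A2) :
  filtration W ->
  cohom_connected A1 -> cohom_connected A2 ->
  DGA_morphism phi ->
  Hinj phi 0 -> Hsurj phi 0 ->
  Hinj phi 1 -> Hsurj phi 1 ->
  Hinj phi 2 ->
  is_equivalence (C := Fcat A1 W) (D := Fcat A2 W)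
    (fun w : 'M[A1]_n => map_mx phi w)
    (fun _ _ (a : 'M[A1]_n) => map_mx phi a).
Proof.
move=> hW _ _ hphi; exact (Fcat_map_equivalence hW hphi (Kfld_two_neq0 b)).
Qed.
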